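(* Let $d>k\geq1$, $\varepsilon\in(0,1)$, $A\succeq0$ symmetric with $\lambda_k>\lambda_{k+1}$, $\beta>0$ with $\lambda_k>2\sqrt\beta\geq\lambda_{k+1}$, $X_0\in\mathrm{St}(d,k)$ with $\cos\theta_k(U_k,X_0)>0$, and ANPM perturbations satisfying for all $t\geq0$: $\|U_{-k}^\top\Xi_t\|_2\leq c(\lambda_k-2\sqrt\beta)\varepsilon$ and $\|U_k^\top\Xi_t\|_2\leq c(\lambda_k-2\sqrt\beta)\cos\theta_k(U_k,X_t)$, $c=1/32$. Then for all $t\geq1$ and all $s\in\{0,\dots,t-1\}$, $$\|C_t^{-1}\|_2\leq\frac{c_1}{((1-c)\lambda_k^++c\sqrt\beta)^t},\quad \|C_{t-1-s}C_t^{-1}\|_2\leq\frac{c_1}{((1-c)\lambda_k^++c\sqrt\beta)^{s+1}},$$ $$\|p_t(\Lambda_{-k})\|_2\leq\sqrt\beta^{\,t},\quad \|q_t(\Lambda_{-k})\|_2\leq(t+1)\sqrt\beta^{\,t},$$ where $c_1:=31/15$ and $\lambda_k^+:=\frac{\lambda_k+\sqrt{\lambda_k^2-4\beta}}{2}$.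
   Context: $A$ has eigenvalues $\lambda_1\geq\dots\geq\lambda_d\geq0$, orthonormal eigenvectors $u_i$; $U_k:=[u_1..u_k]$, $U_{-k}:=[u_{k+1}..u_d]$, $\Lambda_k:=\mathrm{diag}(\lambda_1..\lambda_k)$, $\Lambda_{-k}:=\mathrm{diag}(\lambda_{k+1}..\lambda_d)$. QR: $Y=XR$, $X^\top X=I_k$, $R$ upper triangular, nonnegative diagonal; $\theta_k(U,X):=\arccos\sigma_{\min}(U^\top X)$. ANPM: $(X_1,R_1)=\mathrm{QR}(\tfrac12AX_0+\Xi_0)$; for $t\geq1$, $Y_{t+1}=AX_t-\beta X_{t-1}R_t^{-1}+\Xi_t$, $(X_{t+1},R_{t+1})=\mathrm{QR}(Y_{t+1})$. $E_t:=\Lambda_k^{-1}(U_k^\top\Xi_t)(U_k^\top X_t)^{-1}$; $G_0:=(I_k/2+E_0)^{-1}$, $G_{t+1}:=(I_k-\beta\Lambda_k^{-1}G_t\Lambda_k^{-1}+E_{t+1})^{-1}$; $C_0:=I_k$, $C_t:=\Lambda_kG_{t-1}^{-1}\Lambda_kG_{t-2}^{-1}\cdots\Lambda_kG_0^{-1}$. Polynomials: $p_0=1$, $p_1(x)=x/2$, $p_{t+1}=xp_t-\beta p_{t-1}$; $q_0=1$, $q_1(x)=x$, $q_{t+1}=xq_t-\beta q_{t-1}$. *)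

From HB Require Import structures.
From mathcomp Require Import all_boot all_order all_algebra.
From mathcomp Require Import classical_sets reals.
Set Implicit Arguments. Unset Strict Implicit. Unset Printing Implicit Defensive.
Import Order.TTheory GRing.Theory Num.Theory.
Local Open Scope ring_scope.
Local Open Scope classical_set_scope.

Section Defs.
Variable R : realType.

Definition vnorm n (x : 'cV[R]_n) : R := Num.sqrt (\sum_i (x i 0) ^+ 2).

Definition specnorm m n (M : 'M[R]_(m, n)) : R :=
  sup [set vnorm (M *m x) | x in [set x : 'cV[R]_n | vnorm x = 1]].

Definition sigma_min n (M : 'M[R]_n) : R :=
  inf [set vnorm (M *m x) | x in [set x : 'cV[R]_n | vnorm x = 1]].

Definition cos_theta d k (U X : 'M[R]_(d, k)) : R := sigma_min (U^T *m X).

Definition isQR d k (Y X : 'M[R]_(d, k)) (Rm : 'M[R]_k) : Prop :=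
  [/\ X^T *m X = 1%:M,
      (forall i j : 'I_k, (j < i)%N -> Rm i j = 0),
      (forall i : 'I_k, 0 <= Rm i i) & Y = X *m Rm].

(* three-term recursion  r_0 = 1, r_1 = a, r_{t+1} = X r_t - beta r_{t-1} *)
Fixpoint cheb_pair (beta : R) (a : {poly R}) (t : nat) : {poly R} * {poly R} :=
  match t with
  | 0 => (1, a)
  | t'.+1 => let: (u, v) := cheb_pair beta a t' in (v, 'X * v - beta%:P * u)
  end.

Definition p_poly (beta : R) (t : nat) : {poly R} :=
  (cheb_pair beta ((2%:R)^-1 *: 'X) t).1.
Definition q_poly (beta : R) (t : nat) : {poly R} :=
  (cheb_pair beta 'X t).1.

Definition poly_diag n (P : {poly R}) (lam : 'I_n -> R) : 'M[R]_n :=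
  diag_mx (\row_i P.[lam i]).

Definition E_mat d k (Lk : 'M[R]_k) (Uk : 'M[R]_(d, k))
  (Xi X : nat -> 'M[R]_(d, k)) (t : nat) : 'M[R]_k :=
  invmx Lk *m (Uk^T *m Xi t) *m invmx (Uk^T *m X t).

Fixpoint G_mat d k (beta : R) (Lk : 'M[R]_k) (Uk : 'M[R]_(d, k))
  (Xi X : nat -> 'M[R]_(d, k)) (t : nat) : 'M[R]_k :=
  match t with
  | 0 => invmx ((2%:R)^-1 *: 1%:M + E_mat Lk Uk Xi X 0)
  | t'.+1 => invmx (1%:M - beta *: (invmx Lk *m G_mat beta Lk Uk Xi X t' *m invmx Lk)
                    + E_mat Lk Uk Xi X t'.+1)
  end.

Fixpoint C_mat d k (beta : R) (Lk : 'M[R]_k) (Uk : 'M[R]_(d, k))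
  (Xi X : nat -> 'M[R]_(d, k)) (t : nat) : 'M[R]_k :=
  match t with
  | 0 => 1%:M
  | t'.+1 => Lk *m invmx (G_mat beta Lk Uk Xi X t') *m C_mat beta Lk Uk Xi X t'
  end.

End Defs.

(* Let H_t := G_t^{-1}, so that H_0 = I/2 + E_0, H_{t+1} = I - beta Lambda_k^{-1} G_t Lambda_k^{-1}
   + E_{t+1}, and C_a C_{a+n}^{-1} = G_a Lambda_k^{-1} ... G_{a+n-1} Lambda_k^{-1}.  The second
   perturbation hypothesis gives ||E_t|| <= e := c (lambda_k - 2 sqrt beta) / lambda_k < 1/2, so
   every H_t is bounded below, and by induction b ||G_j|| <= lambda_k Q_j / Q_{j+1}, where
   b := (1 - c) lambda_k^+ + c sqrt beta and Q_j := 1 + B rho^j, rho := beta / b^2, solves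
   Q_{j+2} = (1 + rho) Q_{j+1} - rho Q_j, with B tuned to the base case.  The product then
   telescopes to b^n ||C_a C_{a+n}^{-1}|| <= Q_a / Q_{a+n} <= c_1.
   For |x| <= 2 sqrt beta, p_t(x) is the real part of (x/2 + i sqrt (beta - x^2/4))^t, a complex
   number of modulus sqrt beta, and q_{t+2} = 2 p_{t+2} + beta q_t. *)

From HB Require Import structures.
From mathcomp Require Import all_boot all_order all_algebra.
From mathcomp Require Import classical_sets reals.
From mathcomp Require Import ring lra.
Import Order.TTheory GRing.Theory Num.Theory.
Local Open Scope ring_scope.
Local Open Scope classical_set_scope.
Set Implicit Arguments. Unset Strict Implicit. Unset Printing Implicit Defensive.

Section EuclideanNorm.
Variable R : realType.
Implicit Types (n : nat) (a : R).

Definition sqnorm n (x : 'cV[R]_n) : R := \sum_i x i 0 ^+ 2.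
Definition vdot n (x y : 'cV[R]_n) : R := \sum_i x i 0 * y i 0.

Lemma sqnorm_ge0 n (x : 'cV[R]_n) : 0 <= sqnorm x.
Proof. by apply: sumr_ge0 => i _; rewrite sqr_ge0. Qed.

Lemma vnorm_ge0 n (x : 'cV[R]_n) : 0 <= vnorm x.
Proof. exact: sqrtr_ge0. Qed.

Lemma vnorm_sqr n (x : 'cV[R]_n) : vnorm x ^+ 2 = sqnorm x.
Proof. by rewrite sqr_sqrtr // sqnorm_ge0. Qed.

Lemma vnorm0 n : vnorm (0 : 'cV[R]_n) = 0.
Proof. by rewrite /vnorm big1 ?sqrtr0 // => i _; rewrite mxE expr0n. Qed.

Lemma vnorm_eq0 n (x : 'cV[R]_n) : vnorm x = 0 -> x = 0.
Proof.
move=> x0; apply/matrixP => i j; rewrite (ord1 j) mxE; apply/eqP.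
have sq0 : sqnorm x = 0 by rewrite -vnorm_sqr x0 expr0n.
have /eqP := @psumr_eq0P _ _ _ _ (fun i _ => sqr_ge0 (x i 0)) sq0 i isT.
by rewrite sqrf_eq0.
Qed.

Lemma vnormZ n a (x : 'cV[R]_n) : vnorm (a *: x) = `|a| * vnorm x.
Proof.
rewrite /vnorm -sqrtr_sqr -sqrtrM ?sqr_ge0 // mulr_sumr.
by congr Num.sqrt; apply: eq_bigr => i _; rewrite mxE exprMn.
Qed.

Lemma vdot_le n (x y : 'cV[R]_n) : vdot x y <= vnorm x * vnorm y.
Proof.
set a := vnorm y; set b := vnorm x.
have [a0 b0] : 0 <= a /\ 0 <= b by split; apply: vnorm_ge0.
have [a_eq0|a_neq0] := eqVneq a 0.
  have -> : y = 0 by apply: vnorm_eq0.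
  by rewrite a_eq0 mulr0 /vdot big1 // => i _; rewrite mxE mulr0.
have [b_eq0|b_neq0] := eqVneq b 0.
  have -> : x = 0 by apply: vnorm_eq0.
  by rewrite b_eq0 mul0r /vdot big1 // => i _; rewrite mxE mul0r.
have ab_gt0 : 0 < a * b by rewrite mulr_gt0 // lt0r ?a_neq0 ?b_neq0.
have : 0 <= \sum_i (a * x i 0 - b * y i 0) ^+ 2.
  by apply: sumr_ge0 => i _; rewrite sqr_ge0.
have -> : \sum_i (a * x i 0 - b * y i 0) ^+ 2
    = a ^+ 2 * sqnorm x - 2%:R * a * b * vdot x y + b ^+ 2 * sqnorm y.
  rewrite /sqnorm /vdot !mulr_sumr -sumrN -!big_split /=.
  by apply: eq_bigr => i _; ring.
rewrite -!vnorm_sqr -/a -/b mulrC; nra.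
Qed.

Lemma vnormD n (x y : 'cV[R]_n) : vnorm (x + y) <= vnorm x + vnorm y.
Proof.
rewrite -(@ler_pXn2r _ 2) ?nnegrE ?addr_ge0 ?vnorm_ge0 // vnorm_sqr.
have -> : sqnorm (x + y) = sqnorm x + 2%:R * vdot x y + sqnorm y.
  rewrite /sqnorm /vdot mulr_sumr -!big_split /=.
  by apply: eq_bigr => i _; rewrite mxE; ring.
rewrite -!vnorm_sqr; have := vdot_le x y; nra.
Qed.

Lemma lerB_vnormD n (x y : 'cV[R]_n) : vnorm x - vnorm y <= vnorm (x + y).
Proof.
have := vnormD (x + y) (- y).
by rewrite addrK -scaleN1r vnormZ normrN1 mul1r lerBlDr.
Qed.

Lemma vnorm_entry_le n (x : 'cV[R]_n) i : `|x i 0| <= vnorm x.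
Proof.
rewrite -sqrtr_sqr ler_wsqrtr // (bigD1 i) //= lerDl.
by apply: sumr_ge0 => j _; rewrite sqr_ge0.
Qed.

Lemma vnorm_mulmx_bounded m n (M : 'M[R]_(m, n)) :
  exists K, forall x, vnorm (M *m x) <= K * vnorm x.
Proof.
exists (Num.sqrt (\sum_i (\sum_j `|M i j|) ^+ 2)) => x.
have row_le i : `|(M *m x) i 0| <= (\sum_j `|M i j|) * vnorm x.
  rewrite mxE mulr_suml; apply: le_trans (ler_norm_sum _ _ _) _.
  by apply: ler_sum => j _; rewrite normrM ler_wpM2l ?vnorm_entry_le.
rewrite -[vnorm x]ger0_norm ?vnorm_ge0 // -sqrtr_sqr -sqrtrM; last first.
  by apply: sumr_ge0 => i _; rewrite sqr_ge0.
rewrite ler_wsqrtr // mulr_suml; apply: ler_sum => i _.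
rewrite -exprMn -real_normK ?num_real //.
by rewrite ler_pXn2r ?nnegrE ?normr_ge0 ?mulr_ge0 ?sumr_ge0 ?vnorm_ge0.
Qed.

End EuclideanNorm.

Section SpectralNorm.
Variable R : realType.
Implicit Types (m n p : nat) (a b : R).

Let sphere_image m n (M : 'M[R]_(m, n)) :=
  [set vnorm (M *m x) | x in [set x : 'cV[R]_n | vnorm x = 1]].

Let e0 n : 'cV[R]_n.+1 := delta_mx 0 0.

Let vnorm_e0 n : vnorm (e0 n) = 1.
Proof.
rewrite /vnorm (bigD1 0) //= big1 ?addr0 ?mxE ?eqxx ?expr1n ?sqrtr1 //.
by move=> i /negbTE i_neq0; rewrite mxE i_neq0 expr0n.
Qed.

Let sphere_image_neq0 m n (M : 'M[R]_(m, n.+1)) : sphere_image M !=set0.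
Proof. by exists (vnorm (M *m e0 n)); exists (e0 n); rewrite /= ?vnorm_e0. Qed.

Let sphere_image_ubound m n (M : 'M[R]_(m, n)) : has_ubound (sphere_image M).
Proof.
have [K MK] := vnorm_mulmx_bounded M.
by exists K => _ [x /= x1 <-]; have := MK x; rewrite x1 mulr1.
Qed.

Let sphere_image_lbound m n (M : 'M[R]_(m, n)) : has_lbound (sphere_image M).
Proof. by exists 0 => _ [x _ <-]; apply: vnorm_ge0. Qed.

Let normalize_vnorm n (x : 'cV[R]_n) :
  vnorm x != 0 -> vnorm ((vnorm x)^-1 *: x) = 1.
Proof.
by move=> x_neq0; rewrite vnormZ ger0_norm ?invr_ge0 ?vnorm_ge0 // mulVf.
Qed.

Lemma specnorm_ge0 m n (M : 'M[R]_(m, n.+1)) : 0 <= specnorm M.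
Proof.
apply: le_trans (vnorm_ge0 (M *m e0 n)) _.
by apply: (ub_le_sup (sphere_image_ubound M)); exists (e0 n).
Qed.

Lemma vnorm_mulmx_le m n (M : 'M[R]_(m, n)) x :
  vnorm (M *m x) <= specnorm M * vnorm x.
Proof.
have [x0|x_neq0] := eqVneq (vnorm x) 0.
  by have [K MK] := vnorm_mulmx_bounded M; have := MK x; rewrite x0 !mulr0.
have x_gt0 : 0 < vnorm x by rewrite lt0r x_neq0 vnorm_ge0.
have := ub_le_sup (sphere_image_ubound M) (ex_intro2 _ _ _ (normalize_vnorm x_neq0) erefl).
rewrite /= -scalemxAr vnormZ ger0_norm ?invr_ge0 ?vnorm_ge0 //.
by rewrite ler_pdivrMl // mulrC.
Qed.

Lemma specnorm_le m n (M : 'M[R]_(m, n.+1)) b :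
  (forall x, vnorm (M *m x) <= b * vnorm x) -> specnorm M <= b.
Proof.
move=> Mb; apply: ge_sup (sphere_image_neq0 M) _ => _ [x /= x1 <-].
by have := Mb x; rewrite x1 mulr1.
Qed.

Lemma specnormD_le m n (M N : 'M[R]_(m, n.+1)) :
  specnorm (M + N) <= specnorm M + specnorm N.
Proof.
apply: specnorm_le => x; rewrite mulmxDl mulrDl.
by apply: le_trans (vnormD _ _) _; apply: lerD; apply: vnorm_mulmx_le.
Qed.

Lemma specnormZ_le m n a (M : 'M[R]_(m, n.+1)) :
  specnorm (a *: M) <= `|a| * specnorm M.
Proof.
apply: specnorm_le => x.
by rewrite -scalemxAl vnormZ -mulrA ler_wpM2l ?vnorm_mulmx_le.
Qed.

Lemma specnormM_le m n p (M : 'M[R]_(m, n.+1)) (N : 'M[R]_(n.+1, p.+1)) :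
  specnorm (M *m N) <= specnorm M * specnorm N.
Proof.
apply: specnorm_le => x; rewrite -mulmxA -mulrA.
apply: le_trans (vnorm_mulmx_le _ _) _.
by rewrite ler_wpM2l ?specnorm_ge0 ?vnorm_mulmx_le.
Qed.

Lemma specnorm1_le n : specnorm (1%:M : 'M[R]_n.+1) <= 1.
Proof. by apply: specnorm_le => x; rewrite mul1mx mul1r. Qed.

Lemma sigma_min_ge0 n (M : 'M[R]_n.+1) : 0 <= sigma_min M.
Proof. by apply: lb_le_inf (sphere_image_neq0 M) _ => _ [x _ <-]; apply: vnorm_ge0. Qed.

Lemma sigma_min_vnorm_le n (M : 'M[R]_n) x :
  sigma_min M * vnorm x <= vnorm (M *m x).
Proof.
have [->|x_neq0] := eqVneq (vnorm x) 0; first by rewrite mulr0 vnorm_ge0.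
have x_gt0 : 0 < vnorm x by rewrite lt0r x_neq0 vnorm_ge0.
have := ge_inf (sphere_image_lbound M) (ex_intro2 _ _ _ (normalize_vnorm x_neq0) erefl).
rewrite /= -scalemxAr vnormZ ger0_norm ?invr_ge0 ?vnorm_ge0 //.
by rewrite ler_pdivlMl // mulrC.
Qed.

Lemma bounded_below_unitmx n (M : 'M[R]_n.+1) b :
  0 < b -> (forall x, b * vnorm x <= vnorm (M *m x)) ->
  M \in unitmx /\ specnorm (invmx M) <= b^-1.
Proof.
move=> b_gt0 Mb.
have M_unit : M \in unitmx.
  rewrite -unitmx_tr unitmxE unitfE; apply/negP => /det0P [v v_neq0 vM0].
  have Mv0 : M *m v^T = 0 by rewrite -[M]trmxK -trmx_mul vM0 trmx0.
  have : vnorm v^T = 0.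
    apply/eqP; rewrite eq_le vnorm_ge0 andbT -(pmulr_rle0 _ b_gt0).
    by have := Mb v^T; rewrite Mv0 vnorm0.
  by move/vnorm_eq0/(congr1 trmx); rewrite trmxK trmx0 => v0; rewrite v0 eqxx in v_neq0.
split=> //; apply: specnorm_le => y.
have := Mb (invmx M *m y); rewrite mulKVmx // -ler_pdivlMl // mulrC.
Qed.

Lemma scalar_addmx_vnorm_ge n a (N : 'M[R]_n.+1) x : 0 <= a ->
  (a - specnorm N) * vnorm x <= vnorm ((a%:M + N) *m x).
Proof.
move=> a_ge0; rewrite mulmxDl mul_scalar_mx mulrBl.
apply: le_trans (lerB_vnormD _ _); rewrite vnormZ ger0_norm //.
by rewrite lerB // vnorm_mulmx_le.
Qed.

Lemma specnorm_diag_mx_le n (r : 'rV[R]_n.+1) b :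
  0 <= b -> (forall i, `|r 0 i| <= b) -> specnorm (diag_mx r) <= b.
Proof.
move=> b_ge0 rb; apply: specnorm_le => x.
rewrite -[b]ger0_norm // -sqrtr_sqr -sqrtrM ?sqr_ge0 //.
apply: ler_wsqrtr; rewrite mulr_sumr; apply: ler_sum => i _.
rewrite mul_diag_mx mxE exprMn ler_wpM2r ?sqr_ge0 //.
by rewrite -real_normK ?num_real // ler_pXn2r ?nnegrE ?normr_ge0 // ger0_norm.
Qed.

Lemma diag_mx_vnorm_ge n (r : 'rV[R]_n.+1) b x :
  0 <= b -> (forall i, b <= r 0 i) -> b * vnorm x <= vnorm (diag_mx r *m x).
Proof.
move=> b_ge0 br; rewrite -[b]ger0_norm // -sqrtr_sqr -sqrtrM ?sqr_ge0 //.
apply: ler_wsqrtr; rewrite mulr_sumr; apply: ler_sum => i _.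
rewrite mul_diag_mx mxE exprMn ler_wpM2r ?sqr_ge0 //.
by rewrite ler_pXn2r ?nnegrE ?(le_trans b_ge0 (br i)).
Qed.

Lemma invmxM n (M N : 'M[R]_n.+1) :
  M \in unitmx -> N \in unitmx -> invmx (M *m N) = invmx N *m invmx M.
Proof. by rewrite !mulmxE; apply: invrM. Qed.

End SpectralNorm.

Lemma E_mat_specnorm_le (R : realType) k d (Lk : 'M[R]_k.+1) (Uk : 'M[R]_(d, k.+1))
    (Xi X : nat -> 'M[R]_(d, k.+1)) (lk a : R) t :
  0 < lk -> 0 <= a -> specnorm (invmx Lk) <= lk^-1 ->
  specnorm (Uk^T *m Xi t) <= a * cos_theta Uk (X t) ->
  specnorm (E_mat Lk Uk Xi X t) <= a / lk.
Proof.
rewrite /cos_theta => lk_gt0 a_ge0 Lk_inv_le.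
set M := Uk^T *m X t; set N := Uk^T *m Xi t => N_le.
have NM_le : specnorm N * specnorm (invmx M) <= a.
  have [s_gt0|s_le0] := ltrP 0 (sigma_min M).
    have [_ Minv_le] := bounded_below_unitmx s_gt0 (sigma_min_vnorm_le M).
    apply: le_trans (ler_pM (specnorm_ge0 _) (specnorm_ge0 _) N_le Minv_le) _.
    by rewrite mulfK ?gt_eqF.
  (* the hypothesis forces N = 0, so the junk value of [invmx M] is harmless *)
  have N0 : specnorm N = 0.
    apply/eqP; rewrite eq_le specnorm_ge0 andbT.
    by apply: le_trans N_le _; rewrite mulr_ge0_le0.
  by rewrite N0 mul0r.
rewrite /E_mat -/M -/N.
apply: le_trans (specnormM_le _ _) _.
apply: le_trans (ler_wpM2r (specnorm_ge0 _) (specnormM_le _ _)) _.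
apply: le_trans (ler_wpM2r (specnorm_ge0 _) (ler_wpM2r (specnorm_ge0 _) Lk_inv_le)) _.
by rewrite -mulrA mulrC ler_wpM2r // invr_ge0 ltW.
Qed.

Section ResolventBound.
Variables (R : realType) (k d : nat) (beta lk e b : R) (Q : nat -> R).
Variables (Lk : 'M[R]_k.+1) (Uk : 'M[R]_(d, k.+1)) (Xi X : nat -> 'M[R]_(d, k.+1)).
Hypotheses (lk_gt0 : 0 < lk) (b_gt0 : 0 < b) (beta_ge0 : 0 <= beta).
Hypotheses (Lk_unit : Lk \in unitmx) (Lk_inv_le : specnorm (invmx Lk) <= lk^-1).
Hypotheses (E_le : forall t, specnorm (E_mat Lk Uk Xi X t) <= e) (e_lt : e < 2%:R^-1).
Local Notation rho := (beta / b ^+ 2).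
Hypotheses (Q_gt0 : forall j, 0 < Q j)
  (Q_rec : forall j, Q j.+2 = (1 + rho) * Q j.+1 - rho * Q j).
Hypotheses (G0_le : b / (2%:R^-1 - e) <= lk * (Q 0 / Q 1))
  (rate_le : b + beta / b <= lk * (1 - e)).

Local Notation G := (G_mat beta Lk Uk Xi X).
Local Notation C := (C_mat beta Lk Uk Xi X).

Lemma G_step_lower_bound s j : 0 <= s -> b * s <= lk * (Q j / Q j.+1) ->
  b * Q j.+2 / (Q j.+1 * lk) <= 1 - (beta * (lk^-1 * s * lk^-1) + e).
Proof.
move=> s_ge0 bs_le; have [Qj Qj1] := (Q_gt0 j, Q_gt0 j.+1).
set z := Q j / Q j.+1.
have -> : b * Q j.+2 / (Q j.+1 * lk) = (b + beta / b - beta * z / b) / lk.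
  by rewrite Q_rec /z; field; rewrite !gt_eqF.
have -> : 1 - (beta * (lk^-1 * s * lk^-1) + e) = (lk - beta * (s / lk) - e * lk) / lk.
  by field; rewrite gt_eqF.
have s_le : s / lk <= z / b.
  by rewrite ler_pdivrMr // mulrAC ler_pdivlMr // mulrC [z * _]mulrC.
rewrite ler_pM2r ?invr_gt0 //.
have := ler_wpM2l beta_ge0 s_le; move: rate_le; rewrite mulrBr mulr1 mulrA; lra.
Qed.

Lemma G_mat_bound j : G j \in unitmx /\ b * specnorm (G j) <= lk * (Q j / Q j.+1).
Proof.
elim: j => [|j [_ G_le]] /=.
  have m_gt0 : 0 < 2%:R^-1 - e by rewrite subr_gt0.
  have [|Ginv_unit Ginv_le] :=
    @bounded_below_unitmx R k (2%:R^-1 *: 1%:M + E_mat Lk Uk Xi X 0) _ m_gt0.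
    have half_ge0 : 0 <= 2%:R^-1 :> R by rewrite invr_ge0 ler0n.
    move=> x; rewrite scalemx1; apply: le_trans (scalar_addmx_vnorm_ge _ _ half_ge0).
    by rewrite ler_wpM2r ?vnorm_ge0 // lerD2l lerN2.
  split; first by rewrite unitmx_inv.
  by apply: le_trans G0_le; rewrite ler_wpM2l // ltW.
set s := specnorm (G j); have s_ge0 : 0 <= s by apply: specnorm_ge0.
have m_gt0 : 0 < b * Q j.+2 / (Q j.+1 * lk) by rewrite divr_gt0 ?mulr_gt0.
have [|Ginv_unit Ginv_le] := @bounded_below_unitmx R k
    (1%:M - beta *: (invmx Lk *m G j *m invmx Lk) + E_mat Lk Uk Xi X j.+1) _ m_gt0.
  move=> x; rewrite -addrA; apply: le_trans (scalar_addmx_vnorm_ge _ _ ler01).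
  apply: ler_wpM2r; first exact: vnorm_ge0.
  apply: le_trans (G_step_lower_bound s_ge0 G_le) _; rewrite lerD2l lerN2.
  apply: le_trans (specnormD_le _ _) _; rewrite lerD // -scaleNr.
  apply: le_trans (specnormZ_le _ _) _; rewrite normrN ger0_norm // ler_wpM2l //.
  apply: le_trans (specnormM_le _ _) _.
  have lk_inv_ge0 : 0 <= lk^-1 by rewrite invr_ge0 ltW.
  apply: ler_pM; rewrite ?specnorm_ge0 //.
  by apply: le_trans (specnormM_le _ _) _; apply: ler_pM; rewrite ?specnorm_ge0.
split; first by rewrite unitmx_inv.
apply: le_trans (ler_wpM2l (ltW b_gt0) Ginv_le) _.
rewrite [X in X <= _](_ : _ = lk * (Q j.+1 / Q j.+2)) //.
by field; rewrite !gt_eqF.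
Qed.

Lemma C_mat_unit t : C t \in unitmx.
Proof.
elim: t => [|t IH] /=; first exact: unitmx1.
by rewrite !unitmx_mul Lk_unit IH unitmx_inv (proj1 (G_mat_bound t)).
Qed.

Lemma C_mat_ratio_bound a n :
  b ^+ n * specnorm (C a *m invmx (C (a + n)%N)) <= Q a / Q (a + n)%N.
Proof.
elim: n => [|n IH].
  by rewrite addn0 mulmxV ?C_mat_unit // expr0 mul1r divff ?gt_eqF ?specnorm1_le.
have [G_unit G_le] := G_mat_bound (a + n)%N.
rewrite addnS /= invmxM ?unitmx_mul ?Lk_unit ?unitmx_inv ?C_mat_unit //.
rewrite invmxM ?unitmx_inv // invmxK !mulmxA.
set P := C a *m _; set Gn := G (a + n)%N.
have lk_inv_ge0 : 0 <= lk^-1 by rewrite invr_ge0 ltW.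
have PG_le : specnorm (P *m Gn *m invmx Lk) <= specnorm P * specnorm Gn * lk^-1.
  apply: le_trans (specnormM_le _ _) _.
  by rewrite ler_pM ?mulr_ge0 ?specnorm_ge0 ?specnormM_le.
apply: le_trans (ler_wpM2l (exprn_ge0 _ (ltW b_gt0)) PG_le) _.
have -> : b ^+ n.+1 * (specnorm P * specnorm Gn * lk^-1)
    = (b ^+ n * specnorm P) * (b * specnorm Gn) * lk^-1 by rewrite exprSr; ring.
apply: le_trans (_ : Q a / Q (a + n)%N * (lk * (Q (a + n)%N / Q (a + n)%N.+1)) * lk^-1 <= _).
  rewrite ler_wpM2r ?invr_ge0 ?(ltW lk_gt0) //.
  by apply: ler_pM; rewrite ?mulr_ge0 ?exprn_ge0 ?specnorm_ge0 ?(ltW b_gt0).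
rewrite [X in X <= _](_ : _ = Q a / Q (a + n)%N.+1) //.
by field; rewrite !gt_eqF.
Qed.

End ResolventBound.

Section ChebyshevBounds.
Variable R : realType.
Implicit Types (beta x : R) (t : nat).

Lemma horner_cheb_pairSS beta (a : {poly R}) t x :
  (cheb_pair beta a t.+2).1.[x]
  = x * (cheb_pair beta a t.+1).1.[x] - beta * (cheb_pair beta a t).1.[x].
Proof.
rewrite /=; case: (cheb_pair beta a t) => u v /=.
by rewrite hornerD hornerN !hornerM hornerX hornerC.
Qed.

(* [cpow h w t] is the pair of real and imaginary parts of (h + i w)^t. *)
Fixpoint cpow (h w : R) t : R * R :=
  if t is t'.+1 then let: (a, b) := cpow h w t' in (h * a - w * b, w * a + h * b)
  else (1, 0).

Lemma cpow_sqr_norm h w t : (cpow h w t).1 ^+ 2 + (cpow h w t).2 ^+ 2 = (h ^+ 2 + w ^+ 2) ^+ t.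
Proof.
elim: t => [|t IH] /=; first by rewrite expr1n expr0n addr0.
by move: IH; case: (cpow h w t) => a b /= IH; rewrite [_ ^+ t.+1]exprS -IH; ring.
Qed.

Lemma cpow_recSS h w t :
  (cpow h w t.+2).1 = 2%:R * h * (cpow h w t.+1).1 - (h ^+ 2 + w ^+ 2) * (cpow h w t).1.
Proof. by rewrite /=; case: (cpow h w t) => a b /=; ring. Qed.

Lemma three_term_bound beta x (u : nat -> R) :
  0 <= beta -> `|x| <= 2%:R * Num.sqrt beta ->
  u 0 = 1 -> u 1 = x / 2%:R -> (forall t, u t.+2 = x * u t.+1 - beta * u t) ->
  forall t, `|u t| <= Num.sqrt beta ^+ t.
Proof.
move=> beta_ge0 x_le u0 u1 u_rec.
set h := x / 2%:R.
have h_le : h ^+ 2 <= beta.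
  rewrite -(sqr_sqrtr beta_ge0) -real_normK ?num_real //.
  rewrite ler_pXn2r ?nnegrE ?sqrtr_ge0 // normrM [`|2%:R^-1|]ger0_norm ?invr_ge0 //.
  by rewrite ler_pdivrMr ?ltr0n // mulrC.
set w := Num.sqrt (beta - h ^+ 2).
have betaE : h ^+ 2 + w ^+ 2 = beta by rewrite sqr_sqrtr ?subr_ge0 // addrC subrK.
have uE t : u t = (cpow h w t).1 /\ u t.+1 = (cpow h w t.+1).1.
  elim: t => [|t [IH IH1]]; first by rewrite u0 u1 /= mulr1 mulr0 subr0.
  split=> //; rewrite u_rec cpow_recSS betaE IH IH1 /h; congr (_ * _ - _).
  by rewrite mulrC mulfVK ?pnatr_eq0.
move=> t; rewrite (proj1 (uE t)).
rewrite -[_ ^+ t]ger0_norm ?exprn_ge0 ?sqrtr_ge0 //.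
rewrite -(ler_pXn2r (n := 2)) ?nnegrE ?normr_ge0 // !real_normK ?num_real //.
rewrite -exprM mulnC exprM sqr_sqrtr // -betaE -cpow_sqr_norm lerDl.
exact: sqr_ge0.
Qed.

Lemma p_poly_bound beta x t : 0 <= beta -> `|x| <= 2%:R * Num.sqrt beta ->
  `|(p_poly beta t).[x]| <= Num.sqrt beta ^+ t.
Proof.
move=> beta_ge0 x_le.
apply: (@three_term_bound beta x (fun t => (p_poly beta t).[x])) => //.
- by rewrite /= hornerE.
- by rewrite /p_poly /= !hornerE mulrC.
- by move=> s; rewrite /p_poly horner_cheb_pairSS.
Qed.

Lemma q_poly_bound beta x t : 0 <= beta -> `|x| <= 2%:R * Num.sqrt beta ->
  `|(q_poly beta t).[x]| <= t.+1%:R * Num.sqrt beta ^+ t.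
Proof.
move=> beta_ge0 x_le.
set p := fun j => (p_poly beta j).[x]; set q := fun j => (q_poly beta j).[x].
have p_rec j : p j.+2 = x * p j.+1 - beta * p j by rewrite /p /p_poly horner_cheb_pairSS.
have q_rec j : q j.+2 = x * q j.+1 - beta * q j by rewrite /q /q_poly horner_cheb_pairSS.
have [p0 p1] : p 0 = 1 /\ p 1 = x / 2%:R by rewrite /p /= !hornerE mulrC.
have [q0 q1] : q 0 = 1 /\ q 1 = x by rewrite /q /= !hornerE.
have qE j : q j.+2 = 2%:R * p j.+2 + beta * q j /\ q j.+3 = 2%:R * p j.+3 + beta * q j.+1.
  elim: j => [|j [IH IH1]].
    by rewrite !(q_rec, p_rec) q1 q0 p1 p0; split; field.
  split=> //; have pE : p j.+2 = (q j.+2 - beta * q j) / 2%:R by rewrite IH; field.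
  by rewrite (q_rec j.+2) IH1 (p_rec j.+2) pE (q_rec j); field.
have q_le j : `|q j| <= j.+1%:R * Num.sqrt beta ^+ j
           /\ `|q j.+1| <= j.+2%:R * Num.sqrt beta ^+ j.+1.
  elim: j => [|j [IH IH1]]; first by rewrite q0 q1 normr1 mul1r expr0 lexx expr1.
  split=> //; rewrite (proj1 (qE j)); apply: le_trans (ler_normD _ _) _.
  rewrite !normrM (ger0_norm (ler0n _ 2)) (ger0_norm beta_ge0).
  have p_le := p_poly_bound j.+2 beta_ge0 x_le.
  apply: le_trans (lerD (ler_wpM2l (ler0n _ 2) p_le) (ler_wpM2l beta_ge0 IH)) _.
  have betaE : beta = Num.sqrt beta ^+ 2 by rewrite sqr_sqrtr.
  set sb := Num.sqrt beta in betaE *; rewrite [in X in X <= _]betaE.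
  by rewrite le_eqVlt; apply: predU1l; rewrite -!natr1 !exprS; ring.
exact: (proj1 (q_le t)).
Qed.

End ChebyshevBounds.

Section Constants.
Variable R : realType.
Implicit Types (lk beta B rho z : R).

Definition geomQ B rho j : R := 1 + B * rho ^+ j.

Lemma geomQ_rec B rho j :
  geomQ B rho j.+2 = (1 + rho) * geomQ B rho j.+1 - rho * geomQ B rho j.
Proof. by rewrite /geomQ !exprS; ring. Qed.

Lemma geomQ_exists rho z c1 :
  0 < rho < 1 -> 0 < z -> z * rho < 1 -> z * (1 - rho) <= c1 * (1 - z * rho) -> 1 <= c1 ->
  exists B, [/\ forall j, 0 < geomQ B rho j, geomQ B rho 0 / geomQ B rho 1 = z
             & forall a n, geomQ B rho a / geomQ B rho (a + n)%N <= c1].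
Proof.
move=> /andP[rho_gt0 rho_lt1] z_gt0 zrho_lt1 zc1 c1_ge1.
have d_gt0 : 0 < 1 - z * rho by rewrite subr_gt0.
exists ((z - 1) / (1 - z * rho)); set B := (z - 1) / _.
have B_gt : -1 < B by rewrite ltr_pdivlMr //; nra.
have rho_pow j : 0 < rho ^+ j <= 1 by rewrite exprn_gt0 // exprn_ile1 // ltW.
have Q_gt0 j : 0 < geomQ B rho j.
  by have /andP[r_gt0 r_le1] := rho_pow j; rewrite /geomQ; have [] := leP 0 B; nra.
split=> // [|a n].
  rewrite /geomQ expr0 expr1 mulr1 /B; field.
  by rewrite subr_eq0 eq_sym lt_eqF //= gt_eqF //; nra.
rewrite ler_pdivrMr //; have [B_ge0|B_lt0] := leP 0 B.
  have Qa_le : geomQ B rho a <= 1 + B.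
    by rewrite lerD2l ler_piMr // (andP (rho_pow a)).2.
  have B_le : B <= c1 - 1 by rewrite /B ler_pdivrMr //; nra.
  have Qan_ge : 1 <= geomQ B rho (a + n)%N.
    by rewrite lerDl mulr_ge0 // ltW // (andP (rho_pow _)).1.
  apply: le_trans Qa_le _; nra.
have Q_mono : geomQ B rho a <= geomQ B rho (a + n)%N.
  rewrite lerD2l ler_nM2l // exprD ler_piMr //.
  - exact: ltW (andP (rho_pow a)).1.
  - exact: (andP (rho_pow n)).2.
by apply: le_trans Q_mono _; rewrite ler_peMl // ltW.
Qed.

Definition anpm_rate lk beta : R :=
  (1 - 32%:R^-1) * ((lk + Num.sqrt (lk ^+ 2 - 4%:R * beta)) / 2%:R)
  + 32%:R^-1 * Num.sqrt beta.

Definition anpm_eps lk beta : R := 32%:R^-1 * (lk - 2%:R * Num.sqrt beta) / lk.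

Lemma lambda_plus_bounds lk beta : 0 < beta -> 2%:R * Num.sqrt beta < lk ->
  let lp := (lk + Num.sqrt (lk ^+ 2 - 4%:R * beta)) / 2%:R in
  lk * lp - lp ^+ 2 - beta = 0 /\ Num.sqrt beta < lp.
Proof.
move=> beta_gt0 lk_gt lp; split.
  have /sqr_sqrtr : 0 <= lk ^+ 2 - 4%:R * beta.
    rewrite -(sqr_sqrtr (ltW beta_gt0)); have := sqrtr_ge0 beta; nra.
  rewrite /lp; set r := Num.sqrt _ => r2.
  have -> : lk * ((lk + r) / 2%:R) - ((lk + r) / 2%:R) ^+ 2 - beta
          = (lk ^+ 2 - r ^+ 2 - 4%:R * beta) / 4%:R by field.
  by rewrite r2; field.
apply: (@lt_le_trans _ _ (lk / 2%:R)); first by rewrite ltr_pdivlMr ?ltr0n // mulrC.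
by rewrite ler_pM2r ?invr_gt0 ?ltr0n // lerDl sqrtr_ge0.
Qed.

Lemma anpm_rate_bounds lk beta : 0 < beta -> 2%:R * Num.sqrt beta < lk ->
  let sb := Num.sqrt beta in
  let b := anpm_rate lk beta in
  let P := lk / 2%:R - 32%:R^-1 * (lk - 2%:R * sb) in
  [/\ sb < b, b ^+ 2 + beta <= (lk - 32%:R^-1 * (lk - 2%:R * sb)) * b,
      sb < P & b ^+ 2 + (31%:R / 15%:R - 1) * beta <= 31%:R / 15%:R * P * b].
Proof.
move=> beta_gt0 lk_gt sb b P.
have [lp_root sb_lt_lp] := lambda_plus_bounds beta_gt0 lk_gt.
rewrite -/sb in lk_gt sb_lt_lp.
set lp := (lk + _) / 2%:R in lp_root sb_lt_lp.
have sb_gt0 : 0 < sb by rewrite sqrtr_gt0.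
have betaE : beta = sb ^+ 2 by rewrite sqr_sqrtr ?ltW.
have -> : b = (1 - 32%:R^-1) * lp + 32%:R^-1 * sb by [].
clearbody lp; rewrite {}/P; clear b; rewrite betaE in lp_root *.
set c : R := 32%:R^-1.
have [c_gt0 c_lt1] : 0 < c /\ c < 1 by rewrite invr_gt0 ltr0n invf_lt1 ?ltr0n ?ltr1n.
set b := (1 - c) * lp + c * sb.
have sb_lt_b : sb < b by rewrite /b; nra.
have b_gt0 : 0 < b by apply: lt_trans sb_lt_b.
have rate_le : b ^+ 2 + sb ^+ 2 <= (lk - c * (lk - 2%:R * sb)) * b.
  have : 0 <= lp * ((lk - c * (lk - 2%:R * sb)) * b - b ^+ 2 - sb ^+ 2).
    have -> : lp * ((lk - c * (lk - 2%:R * sb)) * b - b ^+ 2 - sb ^+ 2)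
        = c * (1 - c) * sb * (lp - sb) ^+ 2 + (1 - c) * b * (lk * lp - lp ^+ 2 - sb ^+ 2).
      by rewrite /b; ring.
    by rewrite lp_root mulr0 addr0 !mulr_ge0 ?sqr_ge0 ?subr_ge0 ?ltW.
  by rewrite pmulr_rge0 ?(lt_trans sb_gt0) // subr_ge0 lerBrDr addrC.
have sb_lt_P : sb < lk / 2%:R - c * (lk - 2%:R * sb) by rewrite /c; lra.
split=> //.
have -> : 31%:R / 15%:R * (lk / 2%:R - c * (lk - 2%:R * sb))
        = lk - c * (lk - 2%:R * sb) + sb / 15%:R by rewrite /c; field.
have -> : 31%:R / 15%:R - 1 = 1 + 15%:R^-1 :> R by field.
nra.
Qed.

Lemma anpm_constants lk beta : 0 < beta -> 2%:R * Num.sqrt beta < lk ->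
  let b := anpm_rate lk beta in
  let e := anpm_eps lk beta in
  let rho := beta / b ^+ 2 in
  0 < b /\ exists B, [/\ e < 2%:R^-1,
    b / (2%:R^-1 - e) <= lk * (geomQ B rho 0 / geomQ B rho 1),
    forall j, 0 < geomQ B rho j,
    b + beta / b <= lk * (1 - e)
    & forall a n, geomQ B rho a / geomQ B rho (a + n)%N <= 31%:R / 15%:R].
Proof.
move=> beta_gt0 lk_gt b e rho.
have [] := anpm_rate_bounds beta_gt0 lk_gt; rewrite -/b.
set sb := Num.sqrt beta in lk_gt *; set P := lk / 2%:R - _ => sb_lt_b rate_le sb_lt_P c1_le.
have sb_gt0 : 0 < sb by rewrite sqrtr_gt0.
have betaE : beta = sb * sb by rewrite -expr2 sqr_sqrtr ?ltW.
have lk_gt0 : 0 < lk by apply: lt_trans lk_gt; rewrite mulr_gt0 ?ltr0n.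
have [b_gt0 P_gt0] : 0 < b /\ 0 < P by split; apply: lt_trans sb_gt0 _.
have PE : lk * (2%:R^-1 - e) = P by rewrite /e /anpm_eps -/sb /P; field; rewrite gt_eqF.
set z := b / P.
have zrhoE : z * rho = beta / (P * b) by rewrite /z /rho; field; rewrite !gt_eqF.
have rho_gt0 : 0 < rho by rewrite divr_gt0 ?exprn_gt0.
have rho_lt1 : rho < 1 by rewrite ltr_pdivrMr ?exprn_gt0 // mul1r betaE; nra.
have zrho_lt1 : z * rho < 1 by rewrite zrhoE ltr_pdivrMr ?mulr_gt0 // mul1r betaE; nra.
have z_c1 : z * (1 - rho) <= 31%:R / 15%:R * (1 - z * rho).
  have -> : z * (1 - rho) = (b ^+ 2 - beta) / (P * b) by rewrite /z /rho; field; rewrite !gt_eqF.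
  have -> : 1 - z * rho = (P * b - beta) / (P * b) by rewrite zrhoE; field; rewrite !gt_eqF.
  by rewrite mulrA ler_pM2r ?invr_gt0 ?mulr_gt0 //; lra.
have c1_ge1 : 1 <= 31%:R / 15%:R :> R by rewrite ler_pdivlMr ?ltr0n // mul1r ler_nat.
have [|B [Q_gt0 Q01 Q_le]] := geomQ_exists _ (divr_gt0 b_gt0 P_gt0) zrho_lt1 z_c1 c1_ge1.
  by rewrite rho_gt0.
split=> //; exists B; split=> //.
- by rewrite -subr_gt0 -(pmulr_rgt0 _ lk_gt0) PE.
- by rewrite Q01 /z -PE invfM mulrCA mulVKf ?gt_eqF.
- have -> : lk * (1 - e) = lk - 32%:R^-1 * (lk - 2%:R * sb).
    by rewrite /e /anpm_eps -/sb; field; rewrite gt_eqF.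
  by rewrite -(ler_pM2r b_gt0) mulrDl mulfVK ?gt_eqF // -expr2.
Qed.

End Constants.

Theorem lemma5 (R : realType) (k' m' : nat)
  (A : 'M[R]_(k'.+1 + m'.+1)) (lam : 'I_(k'.+1 + m'.+1) -> R)
  (U : 'M[R]_(k'.+1 + m'.+1))
  (beta eps : R) (X Xi : nat -> 'M[R]_(k'.+1 + m'.+1, k'.+1))
  (Rm : nat -> 'M[R]_k'.+1) :
  let lk := lam (lshift m'.+1 (@ord_max k')) in      (* lambda_k *)
  let lk1 := lam (rshift k'.+1 (@ord0 m')) in        (* lambda_{k+1} *)
  let Uk := lsubmx U in                              (* U_k *)
  let Umk := rsubmx U in                             (* U_{-k} *)
  let c := 32%:R^-1 : R in
  0 < eps < 1 ->
  A^T = A ->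
  U^T *m U = 1%:M ->
  A = U *m diag_mx (\row_i lam i) *m U^T ->
  (forall i j : 'I_(k'.+1 + m'.+1), (i <= j)%N -> lam j <= lam i) ->
  (forall i, 0 <= lam i) ->
  lk > lk1 ->
  0 < beta ->
  lk > 2%:R * Num.sqrt beta ->
  2%:R * Num.sqrt beta >= lk1 ->
  (X 0)^T *m X 0 = 1%:M ->
  cos_theta Uk (X 0) > 0 ->
  isQR ((2%:R)^-1 *: (A *m X 0) + Xi 0) (X 1%N) (Rm 1%N) ->
  (forall t, (1 <= t)%N ->
     isQR (A *m X t - beta *: (X t.-1 *m invmx (Rm t)) + Xi t) (X t.+1) (Rm t.+1)) ->
  (forall t, specnorm (Umk^T *m Xi t) <= c * (lk - 2%:R * Num.sqrt beta) * eps) ->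
  (forall t, specnorm (Uk^T *m Xi t)
               <= c * (lk - 2%:R * Num.sqrt beta) * cos_theta Uk (X t)) ->
  let c1 := 31%:R / 15%:R : R in
  let lkp := (lk + Num.sqrt (lk ^+ 2 - 4%:R * beta)) / 2%:R in
  let Lk := diag_mx (\row_(i < k'.+1) lam (lshift m'.+1 i)) in   (* Lambda_k *)
  let lamm := fun i : 'I_m'.+1 => lam (rshift k'.+1 i) in        (* Lambda_{-k} entries *)
  let C := C_mat beta Lk Uk Xi X in
  forall t, (1 <= t)%N ->
  [/\ specnorm (invmx (C t)) <= c1 / ((1 - c) * lkp + c * Num.sqrt beta) ^+ t,
      (forall s, (s < t)%N ->
         specnorm (C (t - 1 - s)%N *m invmx (C t))
           <= c1 / ((1 - c) * lkp + c * Num.sqrt beta) ^+ s.+1),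
      specnorm (poly_diag (p_poly beta t) lamm) <= Num.sqrt beta ^+ t &
      specnorm (poly_diag (q_poly beta t) lamm) <= t.+1%:R * Num.sqrt beta ^+ t].
Proof.
(* C_t, G_t and E_t are functions of X and Xi alone. *)
move=> lk lk1 Uk Umk c _ _ _ _ lam_anti lam_ge0 _ beta_gt0 lk_gt lk1_le _ _ _ _ _ Xi_le
  c1 lkp Lk lamm C t _.
have lk_gt0 : 0 < lk by apply: le_lt_trans lk_gt; rewrite mulr_ge0 ?sqrtr_ge0.
have [Lk_unit Lk_inv_le] : Lk \in unitmx /\ specnorm (invmx Lk) <= lk^-1.
  apply: (bounded_below_unitmx lk_gt0) => x.
  apply: (diag_mx_vnorm_ge _ (ltW lk_gt0)) => i.
  by rewrite mxE; apply: lam_anti; rewrite /= -ltnS.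
have cdelta_ge0 : 0 <= c * (lk - 2%:R * Num.sqrt beta).
  by rewrite mulr_ge0 ?invr_ge0 ?ler0n // subr_ge0 ltW.
have E_le s := E_mat_specnorm_le lk_gt0 cdelta_ge0 Lk_inv_le (Xi_le s).
have [b_gt0 [B [e_lt G0_le Q_gt0 rate_le Q_le]]] := anpm_constants beta_gt0 lk_gt.
have C_le a n : specnorm (C a *m invmx (C (a + n)%N)) <= c1 / anpm_rate lk beta ^+ n.
  rewrite ler_pdivlMr ?exprn_gt0 // mulrC; apply: le_trans (Q_le a n).
  exact: (C_mat_ratio_bound lk_gt0 b_gt0 (ltW beta_gt0) Lk_unit Lk_inv_le E_le e_lt
    Q_gt0 (geomQ_rec _ _) G0_le rate_le).
have lamm_le i : `|lamm i| <= 2%:R * Num.sqrt beta.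
  by rewrite ger0_norm ?lam_ge0 // (le_trans _ lk1_le) // lam_anti //= leq_add2l.
split.
- by have := C_le 0%N t; rewrite add0n mul1mx.
- by move=> s s_lt; have := C_le (t - 1 - s)%N s.+1; rewrite -subnDA add1n subnK.
- apply: specnorm_diag_mx_le => [|i]; first by rewrite exprn_ge0 ?sqrtr_ge0.
  by rewrite mxE p_poly_bound ?(ltW beta_gt0).
- apply: specnorm_diag_mx_le => [|i]; first by rewrite mulr_ge0 ?exprn_ge0 ?sqrtr_ge0.
  by rewrite mxE q_poly_bound ?(ltW beta_gt0).
Qed.
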